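(* Let $X$ be an FK-space containing $\phi$. Then $\phi\subseteq D_p^qS\subseteq D_p^qW\subseteq D_p^qF\subseteq D_p^qB\subseteq X$ and $\phi\subseteq D_p^qS\subseteq D_p^qW\subseteq\overline{\phi}$, where all these subspaces are computed in $X$ and $\overline{\phi}$ is the closure of $\phi$ in $X$.
   Context: An FK-space is a vector subspace of the space $w$ of all complex sequences with a complete metrizable locally convex topology in which coordinate functionals are continuous; $X'$ is its continuous dual. $\delta^j$ has $1$ in position $j$, $0$ elsewhere; $\phi=\operatorname{span}\{\delta^j\}$. $p(n)<q(n)$ are nonnegative integer sequences with $q(n)\to\infty$. For $x\in w$, $x^{(k)}=\sum_{j=1}^kx_j\delta^j$ and $T_n(x)=\frac{1}{q(n)-p(n)}\sum_{k=p(n)+1}^{q(n)}x^{(k)}$, so $f(T_n(x))=\frac{1}{q(n)-p(n)}\sum_{k=p(n)+1}^{q(n)}\sum_{j=1}^kx_jf(\delta^j)$. Subspaces: $D_p^qS=\{x\in X: T_n(x)\to x \text{ in } X\}$; $D_p^qW=\{x\in X: f(T_n(x))\to f(x)\ \forall f\in X'\}$; $D_p^qF^+=\{x\in w: \lim_n f(T_n(x))\text{ exists }\forall f\in X'\}$; $D_p^qB^+=\{x\in w:\sup_n|f(T_n(x))|<\infty\ \forall f\in X'\}$; $D_p^qF=D_p^qF^+\cap X$; $D_p^qB=D_p^qB^+\cap X$. *)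

From HB Require Import structures.
From mathcomp Require Import all_boot all_order all_algebra.
From mathcomp Require Import all_classical all_reals all_analysis.
From mathcomp Require Import complex.
Set Implicit Arguments. Unset Strict Implicit. Unset Printing Implicit Defensive.
Import Order.TTheory GRing.Theory Num.Theory.
Import numFieldTopology.Exports numFieldNormedType.Exports.
Local Open Scope classical_set_scope.
Local Open Scope ring_scope.

Notation Ctop R := ((R[i])^o) (only parsing).

(* The space w of all complex sequences; indices are 0-based here:
   the paper's coordinate x_j (j >= 1) is [x (j-1)]. *)
Definition wseq (R : realType) := nat -> R[i].

Definition delta (R : realType) (j : nat) : wseq R := fun i => (i == j)%:R.
Arguments delta R j : clear implicits.

Definition phi (R : realType) : set (wseq R) :=
  [set x | exists (N : nat) (c : nat -> R[i]),
     forall i, x i = \sum_(j < N) c j * delta R j i].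
Arguments phi R : clear implicits.

(* k-th section x^(k) = sum_{paper j = 1..k} x_j delta^j, i.e. the first k
   coordinates of x. *)
Definition section (R : realType) (k : nat) (x : wseq R) : wseq R :=
  fun i => if (i < k)%N then x i else 0.

(* T_n(x) = 1/(q n - p n) * sum_{k = p n + 1}^{q n} x^(k). *)
Definition Tn (R : realType) (p q : nat -> nat) (n : nat) (x : wseq R) : wseq R :=
  fun i => ((q n - p n)%:R)^-1 * \sum_(p n <= k < q n) section k.+1 x i.

Definition complete_metric_for (R : realType) (V : tvsType R[i])
    (d : V -> V -> R) : Prop :=
  [/\ (forall x y, 0 <= d x y) /\ (forall x y, d x y = 0 <-> x = y),
      forall x y, d x y = d y x,
      forall x y z, d x z <= d x y + d y z,
      forall (x : V) (A : set V),
        nbhs x A <-> (exists2 e : R, 0 < e & [set y | d x y < e] `<=` A) &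
      forall u : nat -> V,
        (forall e : R, 0 < e -> exists N : nat, forall m n : nat,
            (N <= m)%N -> (N <= n)%N -> d (u m) (u n) < e) ->
        exists v : V, u @ \oo --> v].

(* An FK-space is represented by a locally convex topological vector space V
   over C (tvsType = locally convex tvs) together with a linear injection
   iota : V -> w; the FK-space (as a subspace of w) is X = range iota, with
   the topology transported from V. *)
Definition FKspace (R : realType) (V : tvsType R[i]) (iota : V -> wseq R) : Prop :=
  [/\ injective iota,
      forall (a : R[i]) (u v : V) (i : nat),
        iota (a *: u + v) i = a * iota u i + iota v i,
      (exists d : V -> V -> R, complete_metric_for d) &
      forall j : nat, continuous (fun v : V => (iota v j : Ctop R))].

Definition inX (R : realType) (V : tvsType R[i]) (iota : V -> wseq R) : set (wseq R) :=
  range iota.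

(* For x in w, "f (T_n x)" is f applied to the (unique, by injectivity)
   element u n of V with iota (u n) = T_n x (which exists as phi <= X). *)

Definition DS (R : realType) (V : tvsType R[i]) (iota : V -> wseq R)
    (p q : nat -> nat) : set (wseq R) :=
  [set x | exists (v : V) (u : nat -> V), iota v = x /\
     (forall n, iota (u n) = Tn p q n x) /\ u @ \oo --> v].

Definition DW (R : realType) (V : tvsType R[i]) (iota : V -> wseq R)
    (p q : nat -> nat) : set (wseq R) :=
  [set x | exists (v : V) (u : nat -> V), iota v = x /\
     (forall n, iota (u n) = Tn p q n x) /\
     forall f : {scalar V}, continuous (f : V -> Ctop R) ->
       (fun n => (f (u n) : Ctop R)) @ \oo --> (f v : Ctop R)].

Definition DFplus (R : realType) (V : tvsType R[i]) (iota : V -> wseq R)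
    (p q : nat -> nat) : set (wseq R) :=
  [set x | exists u : nat -> V,
     (forall n, iota (u n) = Tn p q n x) /\
     forall f : {scalar V}, continuous (f : V -> Ctop R) ->
       cvg ((fun n => (f (u n) : Ctop R)) @ \oo)].

Definition DBplus (R : realType) (V : tvsType R[i]) (iota : V -> wseq R)
    (p q : nat -> nat) : set (wseq R) :=
  [set x | exists u : nat -> V,
     (forall n, iota (u n) = Tn p q n x) /\
     forall f : {scalar V}, continuous (f : V -> Ctop R) ->
       exists M : R[i], forall n, `|f (u n)| <= M].

Definition DF (R : realType) (V : tvsType R[i]) (iota : V -> wseq R)
    (p q : nat -> nat) : set (wseq R) := DFplus iota p q `&` inX iota.

Definition DB (R : realType) (V : tvsType R[i]) (iota : V -> wseq R)
    (p q : nat -> nat) : set (wseq R) := DBplus iota p q `&` inX iota.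

Definition phi_closure (R : realType) (V : tvsType R[i]) (iota : V -> wseq R)
    : set (wseq R) := iota @` closure (iota @^-1` phi R).

From HB Require Import structures.
From mathcomp Require Import all_boot all_order all_algebra.
From mathcomp Require Import all_classical all_reals all_analysis.
From mathcomp Require Import complex.
From mathcomp Require Import ring lra zify.
Import Order.TTheory GRing.Theory Num.Theory.
Import numFieldTopology.Exports numFieldNormedType.Exports.
Local Open Scope classical_set_scope.
Local Open Scope ring_scope.
Set Implicit Arguments.
Unset Strict Implicit.
Unset Printing Implicit Defensive.

(* Continuous functionals preserve limits and convergent scalar sequences are
   bounded, which gives D_p^qS <= D_p^qW <= D_p^qF <= D_p^qB <= X.  For x
   supported on the first N coordinates, T_n(x) = sum_(j < N) w_n(j) x_j delta^j,
   where the Cesaro weight w_n(j) lies within j / q(n) of 1; since q(n) -> oo,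
   T_n(x) -> x, so phi <= D_p^qS.  Every T_n(x) lies in phi, so if some
   x in D_p^qW were outside the closure of phi, a continuous functional
   vanishing on phi but not at x would contradict f(T_n x) -> f(x).  That
   functional is built by Hahn-Banach: the Minkowski gauge of a convex
   0-neighbourhood U with (x - U) disjoint from phi dominates l + t x |-> t on
   phi + Rx; a dominated real-linear extension g (Zorn's lemma on dominated
   graphs) is continuous, and g(y) - i g(i y) is the complex functional. *)

Local Notation rscale t x := (((t%:C)%C : _[i]) *: x).

Section RealScaling.
Variables (R : realType) (V : lmodType R[i]).
Implicit Types (s t : R) (x y : V).

Lemma rscaleA s t x : rscale s (rscale t x) = rscale (s * t) x.
Proof. by rewrite scalerA rmorphM. Qed.

Lemma rscaleDl s t x : rscale s x + rscale t x = rscale (s + t) x.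
Proof. by rewrite -scalerDl rmorphD. Qed.

Lemma rscale1 x : rscale 1 x = x.
Proof. by rewrite rmorph1 scale1r. Qed.

Lemma rscale0 x : rscale 0 x = 0.
Proof. by rewrite rmorph0 scale0r. Qed.

Lemma rscaleN1 x : rscale (-1) x = - x.
Proof. by rewrite rmorphN1 scaleN1r. Qed.

Lemma rscaleNl t x : rscale (- t) x = - rscale t x.
Proof. by rewrite rmorphN scaleNr. Qed.

End RealScaling.

Section HahnBanach.
Variables (R : realType) (V : lmodType R[i]) (p : V -> R).
Hypothesis p_add : forall x y, p (x + y) <= p x + p y.
Hypothesis p_hom : forall (t : R) x, 0 < t -> p (rscale t x) = t * p x.

Definition dominated_graph (G : set (V * R)) :=
  [/\ forall x a b, G (x, a) -> G (x, b) -> a = b,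
      forall x a y b, G (x, a) -> G (y, b) -> G (x + y, a + b),
      forall t x a, G (x, a) -> G (rscale t x, t * a) &
      forall x a, G (x, a) -> a <= p x].

Lemma dominated_graph00 G : dominated_graph G -> G !=set0 -> G (0, 0).
Proof.
by case=> _ _ GZ _ [[x a] Gxa]; have := GZ 0 _ _ Gxa; rewrite rscale0 mul0r.
Qed.

Lemma dominated_graph_bigcup (F : set (set (V * R))) :
  (forall G, F G -> dominated_graph G) -> total_on F subset ->
  dominated_graph (\bigcup_(G in F) G).
Proof.
move=> Fdom Ftot.
have common e1 e2 : (\bigcup_(G in F) G) e1 -> (\bigcup_(G in F) G) e2 ->
    exists G, [/\ F G, G e1 & G e2].
  move=> [G1 FG1 G1e] [G2 FG2 G2e].
  have [G12|G21] := Ftot _ _ FG1 FG2.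
    by exists G2; split=> //; exact: G12.
  by exists G1; split=> //; exact: G21.
split.
- move=> x a b h1 h2; have [G [FG G1 G2]] := common _ _ h1 h2.
  by have [Gf _ _ _] := Fdom _ FG; exact: Gf G1 G2.
- move=> x a y b h1 h2; have [G [FG G1 G2]] := common _ _ h1 h2.
  by exists G => //; have [_ GD _ _] := Fdom _ FG; exact: GD G1 G2.
- by move=> t x a [G FG Ge]; exists G => //; have [_ _ GZ _] := Fdom _ FG; exact: GZ.
- by move=> x a [G FG Ge]; have [_ _ _ Gp] := Fdom _ FG; exact: Gp.
Qed.

Lemma extension_constant A y : dominated_graph A -> A (0, 0) ->
  exists c, (forall x a, A (x, a) -> a - p (x - y) <= c) /\
            (forall z b, A (z, b) -> c <= p (z + y) - b).
Proof.
move=> [_ AD _ Ap] A00.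
pose E := [set r | exists x a, A (x, a) /\ r = a - p (x - y)].
have ubE z b : A (z, b) -> ubound E (p (z + y) - b).
  move=> Azb _ [x [a [Axa ->]]].
  have := Ap _ _ (AD _ _ _ _ Axa Azb).
  have := p_add (x - y) (z + y).
  have -> : x - y + (z + y) = x + z by rewrite addrACA addNr addr0.
  lra.
have supE : has_sup E.
  by split; [exists (0 - p (0 - y)), 0, 0 | exists (p (0 + y) - 0); exact: ubE].
exists (sup E); split.
- by move=> x a Axa; apply: sup_upper_bound => //; exists x, a.
- by move=> z b Azb; apply: ge_sup; [case: supE | exact: ubE].
Qed.

Definition graph_extension (A : set (V * R)) y c : set (V * R) :=
  [set e | exists x a t, A (x, a) /\ e = (x + rscale t y, a + t * c)].

Lemma graph_extension_functional A y c : dominated_graph A ->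
  ~ (exists a, A (y, a)) ->
  forall x a b, graph_extension A y c (x, a) -> graph_extension A y c (x, b) ->
  a = b.
Proof.
move=> [Af AD AZ _] ny _ a1 a2 [x [a [t [Axa [-> ->]]]]].
move=> [x' [a' [t' [Axa' [ex ->]]]]].
have tt' : t = t'.
  apply: contrapT => /eqP; rewrite -subr_eq0 => tt0; apply: ny.
  exists ((t - t')^-1 * (a' - a)).
  have ANxa := AZ (-1) _ _ Axa; rewrite rscaleN1 mulN1r in ANxa.
  have := AZ ((t - t')^-1) _ _ (AD _ _ _ _ Axa' ANxa).
  suff -> : rscale (t - t')^-1 (x' - x) = y by [].
  have -> : x' - x = rscale (t - t') y.
    have -> : x' = x + rscale t y - rscale t' y by rewrite ex addrK.
    by rewrite -rscaleDl rscaleNl addrAC [x + _]addrC addrK.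
  by rewrite rscaleA mulVf // rscale1.
move: ex; rewrite -tt' => /addIr ex.
by rewrite -ex in Axa'; rewrite (Af _ _ _ Axa Axa').
Qed.

Lemma graph_extension_dominated A y c : dominated_graph A ->
  ~ (exists a, A (y, a)) ->
  (forall x a, A (x, a) -> a - p (x - y) <= c) ->
  (forall z b, A (z, b) -> c <= p (z + y) - b) ->
  dominated_graph (graph_extension A y c).
Proof.
move=> Adom ny c_ge c_le; have [_ AD AZ Ap] := Adom.
split; first exact: graph_extension_functional.
- move=> _ a1 _ a2 [x [a [t [Axa [-> ->]]]]] [x' [a' [t' [Axa' [-> ->]]]]].
  exists (x + x'), (a + a'), (t + t'); split; first exact: AD.
  by rewrite -rscaleDl addrACA; congr (_, _); ring.
- move=> s _ a1 [x [a [t [Axa [-> ->]]]]].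
  exists (rscale s x), (s * a), (s * t); split; first exact: AZ.
  by rewrite scalerDr rscaleA; congr (_, _); ring.
- move=> _ a1 [x [a [t [Axa [-> ->]]]]].
  have [t_lt0|t_gt0|->] := ltgtP t 0; last first.
  + by rewrite rscale0 addr0 mul0r addr0; exact: Ap.
  + have := c_le _ _ (AZ t^-1 _ _ Axa).
    have := @p_hom t (rscale t^-1 x + y) t_gt0.
    rewrite scalerDr rscaleA mulfV ?gt_eqF // rscale1 => -> le_c.
    have : t * c <= t * (p (rscale t^-1 x + y) - t^-1 * a) by rewrite ler_pM2l.
    rewrite mulrBr mulrA mulfV ?gt_eqF // mul1r; lra.
  + have s_gt0 : 0 < - t by rewrite oppr_gt0.
    have := c_ge _ _ (AZ (- t)^-1 _ _ Axa).
    have := @p_hom (- t) (rscale (- t)^-1 x - y) s_gt0.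
    rewrite scalerDr rscaleA mulfV ?gt_eqF // rscale1 scalerN rscaleNl opprK.
    move=> -> ge_c.
    have : - t * ((- t)^-1 * a - p (rscale (- t)^-1 x - y)) <= - t * c.
      by rewrite ler_pM2l.
    rewrite mulrBr mulrA mulfV ?gt_eqF // mul1r; lra.
Qed.

Lemma dominated_graph_extend A y : dominated_graph A -> A !=set0 ->
  ~ (exists a, A (y, a)) -> exists2 A', dominated_graph A' & A `<` A'.
Proof.
move=> Adom An ny.
have A00 := dominated_graph00 Adom An.
have [c [c_ge c_le]] := extension_constant y Adom A00.
exists (graph_extension A y c); first exact: graph_extension_dominated.
split.
  move=> [x a] Axa; exists x, a, 0; split => //.
  by rewrite rscale0 addr0 mul0r addr0.
move=> sub; apply: ny; exists c; apply: sub; exists 0, 0, 1; split => //.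
by rewrite rscale1 add0r mul1r add0r.
Qed.

Lemma hahn_banach_real G0 : dominated_graph G0 -> G0 !=set0 ->
  exists g : V -> R, [/\ forall x y, g (x + y) = g x + g y,
    forall t x, g (rscale t x) = t * g x, forall x, g x <= p x &
    forall x a, G0 (x, a) -> g x = a].
Proof.
move=> G0dom [e0 G0e0].
(* set0 is admitted so that the empty chain has an upper bound. *)
pose P G := dominated_graph G /\ (G = set0 \/ G0 `<=` G).
have [A [[Adom AG0] Amax]] : exists A, P A /\ forall B, A `<` B -> ~ P B.
  apply: Zorn_bigcup => F FP Ftot; split.
    by apply: dominated_graph_bigcup => // G /FP [].
  have [[G FG G0G]|noG0] := pselect (exists2 G, F G & G0 `<=` G).
    by right; move=> e G0e; exists G => //; exact: G0G.
  left; apply/seteqP; split => // e [G FG Ge].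
  have [_ [G_0|G0G]] := FP G FG; first by rewrite G_0 in Ge.
  by case: noG0; exists G.
have {AG0}G0A : G0 `<=` A.
  case: AG0 => // A0; exfalso; apply: (Amax G0); last by split; [|right].
  by rewrite A0; split => // sub; exact: sub _ G0e0.
have tot x : exists a, A (x, a).
  apply: contrapT => nx.
  have [A' A'dom AA'] := dominated_graph_extend Adom (ex_intro _ e0 (G0A _ G0e0)) nx.
  by apply: (Amax A' AA'); split; [|right; exact: subset_trans G0A (properW AA')].
pose g x := projT1 (cid (tot x)).
have gP x : A (x, g x) by rewrite /g; case: cid.
case: Adom => Af AD AZ Ap.
exists g; split.
- by move=> x y; apply: Af (gP (x + y)) (AD _ _ _ _ (gP x) (gP y)).
- by move=> t x; apply: Af (gP (rscale t x)) (AZ _ _ _ (gP x)).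
- by move=> x; apply: Ap (gP x).
- by move=> x a G0xa; apply: Af (gP x) (G0A _ G0xa).
Qed.

End HahnBanach.

Section Gauge.
Variables (R : realType) (V : lmodType R[i]) (U : set V).
Hypothesis U0 : U 0.
Hypothesis Uconv : forall x y (l : R), 0 <= l -> l <= 1 -> U x -> U y ->
  U (rscale l x + rscale (1 - l) y).
Hypothesis Uabsorbing : forall x, exists2 t : R, 0 < t & U (rscale t^-1 x).

Definition gauge x := inf [set t : R | 0 < t /\ U (rscale t^-1 x)].

Let gauge_set_neq0 x : [set t : R | 0 < t /\ U (rscale t^-1 x)] !=set0.
Proof. by have [t t0 Ut] := Uabsorbing x; exists t. Qed.

Lemma gauge_ge0 x : 0 <= gauge x.
Proof. by apply: lb_le_inf => // t [t0 _]; exact: ltW. Qed.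

Lemma gauge_le x t : 0 < t -> U (rscale t^-1 x) -> gauge x <= t.
Proof. by move=> t0 Ut; apply: ge_inf => //; exists 0 => s [s0 _]; exact: ltW. Qed.

Lemma gauge_lt x u : gauge x < u -> U (rscale u^-1 x).
Proof.
move=> /(inf_lt (gauge_set_neq0 x))[t [t0 Ut] tu].
have u0 : 0 < u by apply: lt_trans tu.
have := Uconv (ltW (divr_gt0 t0 u0)) _ Ut U0.
rewrite scaler0 addr0 rscaleA.
have -> : t / u * t^-1 = u^-1 by field; rewrite !gt_eqF.
by apply; rewrite ler_pdivrMr // mul1r ltW.
Qed.

Let gauge_homZ_le r x : 0 < r -> gauge (rscale r x) <= r * gauge x.
Proof.
move=> r0; apply/ler_addgt0Pr => e e0.
set s := gauge x + e / r.
have xs : gauge x < s by rewrite ltrDl divr_gt0.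
have s0 : 0 < s := le_lt_trans (gauge_ge0 x) xs.
have -> : r * gauge x + e = r * s by rewrite /s; field; rewrite gt_eqF.
apply: gauge_le; first exact: mulr_gt0.
by rewrite rscaleA invfM mulrAC mulVf ?gt_eqF // mul1r; exact: gauge_lt.
Qed.

Lemma gauge_homZ r x : 0 < r -> gauge (rscale r x) = r * gauge x.
Proof.
move=> r0; apply/le_anti/andP; split; first exact: gauge_homZ_le.
have r'0 : 0 < r^-1 by rewrite invr_gt0.
have := gauge_homZ_le (rscale r x) r'0.
by rewrite rscaleA mulVf ?gt_eqF // rscale1 -ler_pdivlMl.
Qed.

Lemma gauge_subadd x y : gauge (x + y) <= gauge x + gauge y.
Proof.
apply/ler_addgt0Pr => e e0.
set s := gauge x + e / 2; set t := gauge y + e / 2.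
have xs : gauge x < s by rewrite ltrDl divr_gt0.
have yt : gauge y < t by rewrite ltrDl divr_gt0.
have s0 : 0 < s := le_lt_trans (gauge_ge0 x) xs.
have t0 : 0 < t := le_lt_trans (gauge_ge0 y) yt.
have st0 : 0 < s + t by exact: addr_gt0.
have -> : gauge x + gauge y + e = s + t by rewrite /s /t; field.
apply: gauge_le => //.
have := Uconv (ltW (divr_gt0 s0 st0)) _ (gauge_lt xs) (gauge_lt yt).
rewrite !rscaleA.
have -> : s / (s + t) * s^-1 = (s + t)^-1 by field; rewrite !gt_eqF.
have -> : (1 - s / (s + t)) * t^-1 = (s + t)^-1 by field; rewrite !gt_eqF.
by rewrite -scalerDr; apply; rewrite ler_pdivrMr // mul1r lerDl ltW.
Qed.

End Gauge.

Section Complexification.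
Variables (R : realType) (V : lmodType R[i]) (g : V -> R).
Hypothesis gD : forall x y, g (x + y) = g x + g y.
Hypothesis gZ : forall (t : R) x, g (rscale t x) = t * g x.

Definition complexify x : R[i] := (g x)%:C%C - 'i%C * (g ('i%C *: x))%:C%C.

Lemma real_linearN x : g (- x) = - g x.
Proof. by rewrite -rscaleN1 gZ mulN1r. Qed.

Let real_linearZ_complex a x :
  g (a *: x) = complex.Re a * g x + complex.Im a * g ('i%C *: x).
Proof.
rewrite {1}[a]complexE scalerDl gD gZ; congr (_ + _).
by rewrite mulrC -scalerA gZ.
Qed.

Lemma complexify_linear : linear_for *%R complexify.
Proof.
move=> a x y; rewrite /complexify scalerDr !gD.
have -> : 'i%C *: (a *: x) = a *: ('i%C *: x) by rewrite !scalerA mulrC.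
rewrite (real_linearZ_complex a x) (real_linearZ_complex a ('i%C *: x)) scalerA.
have ii : 'i%C * 'i%C = -1 :> R[i] by rewrite -expr2 sqr_i.
rewrite ii scaleN1r real_linearN.
case: a => re im /=.
apply/eqP; rewrite eq_complex /=; apply/andP; split; apply/eqP; ring.
Qed.

Lemma Re_complexify x : complex.Re (complexify x) = g x.
Proof. by rewrite /complexify /= mul0r mulr0 !subr0. Qed.

Lemma complexifyB x y : complexify (x - y) = complexify x - complexify y.
Proof. by rewrite addrC -scaleN1r complexify_linear mulN1r addrC. Qed.

End Complexification.

Lemma complex_gt0_real (R : realType) (e : R[i]) : 0 < e -> exists2 a : R, 0 < a & e = a%:C%C.
Proof.
move=> e0; have /complex_realP[a ea] := gtr0_real e0.
by exists a => //; rewrite -ltcR -ea.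
Qed.

Lemma normc_real (R : realType) (r : R) : `|r%:C%C| = `|r|%:C%C :> R[i].
Proof. by rewrite normc_def /= expr0n addr0 sqrtr_sqr. Qed.

Lemma normc_i (R : realType) : `|'i%C| = 1 :> R[i].
Proof. by rewrite normc_def /= expr0n expr1n add0r sqrtr1. Qed.

Section TvsNeighbourhoods.
Variables (R : realType) (V : tvsType R[i]).

Lemma convex_set_real (U : set V) : convex_set U ->
  forall x y (l : R), 0 <= l -> l <= 1 -> U x -> U y ->
  U (rscale l x + rscale (1 - l) y).
Proof.
move=> Uconvex x y l l0 l1 Ux Uy.
have l0' : (0 : R[i]) <= l%:C%C by rewrite lecR.
have l1' : l%:C%C <= (1 : R[i]) by rewrite -(rmorph1 (real_complex R)) lecR.
have := Uconvex x y (Itv01 l0' l1') (mem_set Ux) (mem_set Uy).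
by rewrite inE rmorphB rmorph1.
Qed.

Lemma nbhs0_absorbing (U : set V) : nbhs 0 U ->
  forall x, exists2 t : R, 0 < t & U (rscale t^-1 x).
Proof.
move=> U0 x.
have : nbhs ((0 : R[i]^o), x) [set z | U (z.1 *: z.2)].
  by apply: (@scale_continuous _ V (0, x)); rewrite /= scale0r.
case=> [[A B]] /= [nA nB] AB.
have [e e0 eA] := (nbhs_ballP _ _).1 nA.
have [a a0 ea] := complex_gt0_real e0.
exists (2 / a); first by rewrite divr_gt0.
apply: (AB ((2 / a)^-1%:C%C, x)); split => //=; last exact: nbhs_singleton.
apply: eA; rewrite -ball_normE /= sub0r normrN normc_real ea ltcR invf_div.
by rewrite ger0_norm ?divr_ge0 ?ltW // ltr_pdivrMr // ltr_pMr // ltr1n.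
Qed.

Lemma nbhs0_scale (c : R[i]) (W : set V) : c != 0 -> nbhs 0 W ->
  nbhs 0 [set z | W (c *: z)].
Proof.
move=> c0 W0; have := nbhs0Z (invr_neq0 c0) W0; apply: filterS => _ [w Ww <-].
by rewrite /= scalerA mulfV // scale1r.
Qed.

Lemma nbhs_subl (x z : V) (W : set V) : nbhs z W ->
  nbhs (x - z) [set y | W (x - y)].
Proof.
have : (fun y => x - y) @ (x - z) --> z.
  rewrite -[X in _ --> X](subKr x z).
  exact: (cvg_comp _ _ (cvg_pair (cvg_cst x) cvg_id) (@sub_continuous V (x, x - z))).
by apply.
Qed.

Lemma convex_nbhs0_sub (W : set V) : nbhs 0 W ->
  exists2 U, nbhs 0 U /\ convex_set U & U `<=` W.
Proof.
have [Bs Bs_convex [Bs_open Bs_basis]] := @locally_convex _ V.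
move=> /Bs_basis[U [BsU U0] UW]; exists U => //; split.
  by apply: open_nbhs_nbhs; split => //; exact: Bs_open.
by apply: Bs_convex; exact: mem_set.
Qed.

Lemma gauge_dominated_small (U : set V) (g : V -> R) :
  nbhs 0 U -> convex_set U -> (forall x, g (- x) = - g x) ->
  (forall x, g x <= gauge U x) ->
  forall eps : R, 0 < eps -> nbhs (0 : V) [set z | `|g z| <= eps].
Proof.
move=> U0 Uconvex gN g_le eps eps0.
have le_eps z : U (rscale eps^-1 z) -> g z <= eps.
  by move=> Uz; apply: le_trans (g_le z) _; exact: gauge_le.
have inv_neq0 : eps^-1%:C%C != 0 :> R[i] by rewrite fmorph_eq0 invr_eq0 gt_eqF.
have Ninv_neq0 : - eps^-1%:C%C != 0 :> R[i] by rewrite oppr_eq0.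
apply: filterS2 (nbhs0_scale inv_neq0 U0) (nbhs0_scale Ninv_neq0 U0) => z /= h1 h2.
rewrite scaleNr -scalerN in h2.
by rewrite ler_norml le_eps // andbT lerNl -gN le_eps.
Qed.

End TvsNeighbourhoods.

Section ComplexifyContinuous.
Variables (R : realType) (V : tvsType R[i]) (g : V -> R).
Hypothesis gD : forall x y, g (x + y) = g x + g y.
Hypothesis gZ : forall (t : R) x, g (rscale t x) = t * g x.
Hypothesis g_small : forall eps : R, 0 < eps -> nbhs (0 : V) [set z | `|g z| <= eps].

Lemma complexify_continuous : continuous (complexify g : V -> Ctop R).
Proof.
move=> x; apply/cvgrPdist_le => _ /complex_gt0_real[e e0 ->].
have e20 : 0 < e / 2 by rewrite divr_gt0.
have i_neq0 : 'i%C != 0 :> R[i] by rewrite -normr_eq0 normc_i oner_eq0.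
have := nbhs_subl x (g_small e20); rewrite subr0 => near1.
have := nbhs_subl x (nbhs0_scale i_neq0 (g_small e20)); rewrite subr0 => near2.
apply: filterS2 near1 near2 => y /= le1 le2.
rewrite -complexifyB // /complexify; apply: le_trans (ler_normB _ _) _.
rewrite normrM normc_i mul1r !normc_real -rmorphD lecR (splitr e).
exact: lerD.
Qed.

End ComplexifyContinuous.

Section LineGraph.
Variables (R : realType) (V : lmodType R[i]) (p : V -> R) (L : set V) (v : V).
Hypothesis p_ge0 : forall x, 0 <= p x.
Hypothesis L0 : L 0.
Hypothesis Llin : forall a x y, L x -> L y -> L (a *: x + y).
Hypothesis vNL : ~ L v.
Hypothesis p_line : forall l t, L l -> 0 < t -> t <= p (l + rscale t v).

Definition line_graph := [set e : V * R | exists l t, L l /\ e = (l + rscale t v, t)].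

Lemma line_graph_dominated : dominated_graph p line_graph.
Proof.
have LZ c l : L l -> L (c *: l) by move=> Ll; rewrite -[c *: l]addr0; exact: Llin.
have LD x y : L x -> L y -> L (x + y) by move=> Lx Ly; rewrite -[x]scale1r; exact: Llin.
split.
- move=> _ a b [l [t [Ll [-> ->]]]] [l' [t' [Ll' [ex ->]]]].
  apply: contrapT => /eqP; rewrite -subr_eq0 => tt'0; apply: vNL.
  have : L (rscale (t - t') v).
    have -> : rscale (t - t') v = l' - l.
      have -> : l' = l + rscale t v - rscale t' v by rewrite ex addrK.
      by rewrite -rscaleDl rscaleNl addrAC [l + _]addrC addrK.
    by rewrite -scaleN1r addrC; exact: Llin.
  by move/(LZ (t - t')^-1%:C%C); rewrite rscaleA mulVf // rscale1.
- move=> _ a _ b [l [t [Ll [-> ->]]]] [l' [t' [Ll' [-> ->]]]].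
  exists (l + l'), (t + t'); split; first exact: LD.
  by rewrite -rscaleDl addrACA.
- move=> s _ a [l [t [Ll [-> ->]]]].
  exists (rscale s l), (s * t); split; first exact: LZ.
  by rewrite scalerDr rscaleA.
- move=> _ a [l [t [Ll [-> ->]]]].
  by have [t_le0|t_gt0] := leP t 0; [exact: le_trans t_le0 (p_ge0 _)|exact: p_line].
Qed.

End LineGraph.

Lemma separation (R : realType) (V : tvsType R[i]) (L : set V) (v : V) :
  L 0 -> (forall a x y, L x -> L y -> L (a *: x + y)) -> ~ closure L v ->
  exists f : {scalar V},
    [/\ continuous (f : V -> Ctop R), forall l, L l -> f l = 0 & f v != 0].
Proof.
move=> L0 Llin vNcl.
have [B Bv LNB] : exists2 B, nbhs v B & forall l, L l -> ~ B l.
  apply: contrapT => nB; apply: vNcl => B Bv; apply: contrapT => LBN0.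
  by apply: nB; exists B => // l Ll Bl; apply: LBN0; exists l.
have := nbhs_subl v Bv; rewrite subrr => /convex_nbhs0_sub[U [Unbhs Uconvex] UB].
have U0 : U 0 := nbhs_singleton Unbhs.
have Uconv := convex_set_real Uconvex.
have Uabs := nbhs0_absorbing Unbhs.
have vNL : ~ L v by move=> Lv; apply: (LNB v Lv); exact: nbhs_singleton.
have LZ c l : L l -> L (c *: l) by move=> Ll; rewrite -[c *: l]addr0; exact: Llin.
have gauge_line l t : L l -> 0 < t -> t <= gauge U (l + rscale t v).
  move=> Ll t0; rewrite leNgt; apply/negP => /(gauge_lt U0 Uconv Uabs).
  rewrite scalerDr rscaleA mulVf ?gt_eqF // rscale1 => /UB /=.
  rewrite opprD addrCA subrr addr0; apply: LNB.
  by rewrite -scaleN1r; exact/LZ/LZ.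
have Gdom := line_graph_dominated (gauge_ge0 Uabs) L0 Llin vNL gauge_line.
have G_neq0 : line_graph L v !=set0.
  by exists (0, 0), 0, 0; rewrite rscale0 addr0.
have [g [gD gZ g_le gG]] :=
  hahn_banach_real (gauge_subadd U0 Uconv Uabs) (gauge_homZ U0 Uconv Uabs) Gdom G_neq0.
have gL l : L l -> g l = 0.
  by move=> Ll; apply: gG; exists l, 0; rewrite rscale0 addr0.
pose f : {scalar V} := HB.pack (complexify g)
  (GRing.isLinear.Build _ _ _ _ (complexify g) (complexify_linear gD gZ)).
exists f; split.
- apply: (complexify_continuous gD gZ).
  exact: gauge_dominated_small Unbhs Uconvex (real_linearN gZ) g_le.
- by move=> l Ll; rewrite /= /complexify !gL ?mulr0 ?subr0 //; exact: LZ.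
- apply/eqP => /(congr1 (@complex.Re R)); rewrite Re_complexify (gG v 1) /=.
    by move/eqP; rewrite oner_eq0.
  by exists 0, 1; rewrite rscale1 add0r.
Qed.

Lemma sum_nat_ltn (P Q j : nat) : (P <= Q)%N ->
  (\sum_(P <= k < Q) (k < j)%N)%N = (minn Q j - minn P j)%N.
Proof.
elim: Q => [|Q IH] PQ; first by rewrite big_geq //; lia.
move: PQ; rewrite leq_eqVlt => /orP[/eqP ->|]; first by rewrite big_geq // subnn.
rewrite ltnS => PQ; rewrite big_nat_recr //= IH //.
by case: (ltnP Q j) => Qj /=; lia.
Qed.

Lemma sum_nat_ltn_mul_le (P Q j : nat) : (P < Q)%N -> (j <= Q)%N ->
  ((\sum_(P <= k < Q) (k < j)%N) * Q <= j * (Q - P))%N.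
Proof.
move=> PQ jQ; rewrite sum_nat_ltn; last exact: ltnW.
have -> : minn Q j = j by lia.
by case: (leqP P j) => Pj; nia.
Qed.

Section CesaroWeight.
Variable R : realType.

Definition cesaro_weight (P Q j : nat) : R[i] :=
  ((Q - P)%:R)^-1 * \sum_(P <= k < Q) ((j < k.+1)%N)%:R.

Lemma Tn_cesaro_weight (p q : nat -> nat) n (x : wseq R) i :
  Tn p q n x i = cesaro_weight (p n) (q n) i * x i.
Proof.
rewrite /Tn /cesaro_weight -mulrA mulr_suml; congr (_ * _).
by apply: eq_bigr => k _; rewrite /section; case: (i < k.+1)%N; rewrite ?mul1r ?mul0r.
Qed.

Lemma cesaro_weight_defect (P Q j : nat) : (P < Q)%N -> (j <= Q)%N ->
  `|1 - cesaro_weight P Q j| <= (j%:R / Q%:R : R)%:C%C.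
Proof.
move=> PQ jQ; rewrite /cesaro_weight.
have -> : \sum_(P <= k < Q) ((j < k.+1)%N)%:R =
    (Q - P)%:R - (\sum_(P <= k < Q) (k < j)%N)%:R :> R[i].
  rewrite natr_sum -sumr_const_nat -sumrB; apply: eq_bigr => k _.
  by rewrite ltnS; case: leqP => _; rewrite ?subr0 ?subrr.
have := sum_nat_ltn_mul_le PQ jQ; move: (\sum_(P <= k < Q) _)%N => c cQ.
have QP0 : ((Q - P)%:R : R[i]) != 0 by rewrite pnatr_eq0 subn_eq0 -ltnNge.
have -> : 1 - ((Q - P)%:R)^-1 * ((Q - P)%:R - c%:R) = c%:R / (Q - P)%:R :> R[i].
  by rewrite mulrBr mulVf // opprB addrC subrK mulrC.
rewrite ger0_norm ?divr_ge0 ?ler0n //.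
rewrite -!(rmorph_nat (real_complex R)) -fmorph_div lecR.
rewrite ler_pdivrMr ?ltr0n ?subn_gt0 // mulrAC ler_pdivlMr ?ltr0n ?(leq_ltn_trans _ PQ) //.
by rewrite -!natrM ler_nat.
Qed.

Lemma cesaro_weight_cvg (p q : nat -> nat) (j : nat) :
  (forall n, (p n < q n)%N) ->
  (forall M : nat, exists N : nat, forall n, (N <= n)%N -> (M <= q n)%N) ->
  (fun n => cesaro_weight (p n) (q n) j : R[i]^o) @ \oo --> (1 : R[i]^o).
Proof.
move=> pq qinf; apply/cvgrPdist_le => _ /complex_gt0_real[a a0 ->].
have ja0 : 0 <= a^-1 * j%:R :> R by rewrite mulr_ge0 // invr_ge0 ltW.
have [N qN] := qinf (maxn (Num.Def.archi_bound (a^-1 * j%:R)) j).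
apply: filterS (nbhs_infty_ge N) => n /qN; rewrite geq_max => /andP[jaq jq].
apply: le_trans (cesaro_weight_defect (pq n) jq) _.
have q0 : (0 < (q n)%:R :> R) by rewrite ltr0n (leq_ltn_trans _ (pq n)).
rewrite lecR ler_pdivrMr // -ler_pdivrMl //.
apply: le_trans (ltW (archi_boundP ja0)) _.
by rewrite ler_nat.
Qed.

End CesaroWeight.

Lemma cvg_sum_scale (R : realType) (V : tvsType R[i]) (N : nat)
    (s : nat -> nat -> R[i]) (c : nat -> R[i]) (w : nat -> V) :
  (forall j, (fun n => s n j : R[i]^o) @ \oo --> (c j : R[i]^o)) ->
  (fun n => \sum_(j < N) s n j *: w j) @ \oo --> \sum_(j < N) c j *: w j.
Proof.
move=> s_cvg; elim: N => [|N IH].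
  by rewrite big_ord0; under eq_fun do rewrite big_ord0; exact: cvg_cst.
rewrite big_ord_recr /=; under eq_fun do rewrite big_ord_recr /=.
have sw_cvg : (fun n => s n N *: w N) @ \oo --> c N *: w N.
  have sN_cvg : (fun n => ((s n N : R[i]^o), w N)) @ \oo --> ((c N : R[i]^o), w N).
    exact: cvg_pair (s_cvg N) (cvg_cst (w N)).
  exact: cvg_comp _ _ sN_cvg (@scale_continuous _ V (_, _)).
exact: (cvg_comp _ _ (cvg_pair IH sw_cvg) (@add_continuous V (_, _))).
Qed.

Section Phi.
Variable R : realType.

Lemma sum_delta (c : nat -> R[i]) (N i : nat) :
  \sum_(j < N) c j * delta R j i = if (i < N)%N then c i else 0.
Proof.
elim: N => [|N IH]; first by rewrite big_ord0.
rewrite big_ord_recr /= IH /delta ltnS [(i <= N)%N]leq_eqVlt.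
case: (eqVneq i N) => [->|iN] /=; first by rewrite ltnn mulr1 add0r.
by rewrite mulr0 addr0.
Qed.

Lemma phiP (x : wseq R) :
  phi R x <-> exists N, forall i, (N <= i)%N -> x i = 0.
Proof.
split=> [[N [c xE]]|[N xN]].
  by exists N => i Ni; rewrite xE sum_delta ltnNge Ni.
by exists N, x => i; rewrite sum_delta; case: ltnP => // /xN.
Qed.

Lemma phi_delta j : phi R (delta R j).
Proof. by apply/phiP; exists j.+1 => i ji; rewrite /delta gtn_eqF. Qed.

Lemma phi_Tn (p q : nat -> nat) n x : phi R (Tn p q n x).
Proof.
apply/phiP; exists (q n) => i qi; rewrite /Tn big1_seq ?mulr0 //.
move=> k /andP[_]; rewrite mem_index_iota => /andP[_ kq].
by rewrite /section ltnNge (leq_trans kq qi).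
Qed.

End Phi.

Section LinearEmbedding.
Variables (R : realType) (V : tvsType R[i]) (iota : V -> wseq R).
Hypothesis iota_lin : forall (a : R[i]) (u v : V) (i : nat),
  iota (a *: u + v) i = a * iota u i + iota v i.

Lemma iota0 : iota 0 = 0.
Proof.
apply/funext => i; have := iota_lin 1 0 0 i.
by rewrite scaler0 addr0 mul1r -{1}[iota 0 i]addr0 => /addrI <-.
Qed.

Lemma iotaD u v i : iota (u + v) i = iota u i + iota v i.
Proof. by have := iota_lin 1 u v i; rewrite scale1r mul1r. Qed.

Lemma iotaZ a u i : iota (a *: u) i = a * iota u i.
Proof. by have := iota_lin a u 0 i; rewrite addr0 iota0 addr0. Qed.

Lemma iota_sum N (c : nat -> R[i]) (w : nat -> V) i :
  iota (\sum_(j < N) c j *: w j) i = \sum_(j < N) c j * iota (w j) i.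
Proof.
elim: N => [|N IH]; first by rewrite !big_ord0 iota0.
by rewrite !big_ord_recr /= iotaD iotaZ IH.
Qed.

Lemma phi_preimage0 : (iota @^-1` phi R) 0.
Proof. by rewrite /preimage /= iota0; apply/phiP; exists 0%N. Qed.

Lemma phi_preimage_lin a x y : (iota @^-1` phi R) x -> (iota @^-1` phi R) y ->
  (iota @^-1` phi R) (a *: x + y).
Proof.
rewrite /preimage /= => /phiP[N xN] /phiP[M yM]; apply/phiP; exists (maxn N M).
by move=> i; rewrite geq_max => /andP[Ni Mi]; rewrite iota_lin xN ?yM ?mulr0 ?addr0.
Qed.

Variables (p q : nat -> nat).

Lemma phi_sub_DS : phi R `<=` inX iota ->
  (forall n, (p n < q n)%N) ->
  (forall M : nat, exists N : nat, forall n, (N <= n)%N -> (M <= q n)%N) ->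
  phi R `<=` DS iota p q.
Proof.
move=> phiX pq qinf x /phiP[N xN].
have e_ex j : exists e, iota e = delta R j.
  by have [e _ <-] := phiX _ (phi_delta R j); exists e.
pose e j := projT1 (cid (e_ex j)).
have eE j : iota (e j) = delta R j by rewrite /e; case: cid.
pose w n j := cesaro_weight R (p n) (q n) j.
have x_supp i : (if (i < N)%N then x i else 0) = x i by case: ltnP => // /xN ->.
exists (\sum_(j < N) x j *: e j), (fun n => \sum_(j < N) w n j *: (x j *: e j)).
split; [|split].
- apply/funext => i; rewrite (iota_sum N x e).
  by under eq_bigr do rewrite eE; rewrite sum_delta.
- move=> n; apply/funext => i; rewrite (iota_sum N (w n) (fun j => x j *: e j)).
  under eq_bigr do rewrite iotaZ eE mulrA.
  rewrite (sum_delta (fun j => w n j * x j)) Tn_cesaro_weight -x_supp.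
  by case: ltnP; rewrite ?mulr0.
- have -> : \sum_(j < N) x j *: e j = \sum_(j < N) 1 *: (x j *: e j).
    by apply: eq_bigr => j _; rewrite scale1r.
  apply: (@cvg_sum_scale _ _ N w (fun=> 1) (fun j => x j *: e j)) => j.
  exact: cesaro_weight_cvg.
Qed.

Lemma DW_sub_phi_closure : DW iota p q `<=` phi_closure iota.
Proof.
move=> x [v [u [vx [uT fu_cvg]]]]; exists v => //.
apply: contrapT => /(separation phi_preimage0 phi_preimage_lin)[f [f_cont f_phi fv]].
have fu0 : (fun n => (f (u n) : Ctop R)) @ \oo --> (0 : Ctop R).
  by apply: cvg_near_cst; apply: nearW => n; rewrite f_phi //= uT; exact: phi_Tn.
by move/eqP: fv; apply; exact: cvg_unique (fu_cvg f f_cont) fu0.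
Qed.

End LinearEmbedding.

Section Inclusions.
Variables (R : realType) (V : tvsType R[i]) (iota : V -> wseq R) (p q : nat -> nat).

Lemma DS_sub_DW : DS iota p q `<=` DW iota p q.
Proof.
move=> x [v [u [vx [uT u_cvg]]]]; exists v, u; do 2!split=> //.
by move=> f f_cont; exact: continuous_cvg (f_cont v) u_cvg.
Qed.

Lemma DW_sub_DF : DW iota p q `<=` DF iota p q.
Proof.
move=> x [v [u [vx [uT fu_cvg]]]]; split; last by exists v.
exists u; split=> [//|f f_cont].
exact: cvgP _ (fu_cvg f f_cont).
Qed.

Lemma DF_sub_DB : DF iota p q `<=` DB iota p q.
Proof.
move=> x [[u [uT fu_cvg]] xX]; split=> //; exists u; split=> [//|f f_cont].
have [M [_ fuM]] := cvg_seq_bounded (fu_cvg f f_cont).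
by exists (M + 1) => n; apply: (fuM (M + 1)) => //; rewrite ltrDl.
Qed.

End Inclusions.

Theorem mainTheorem6 (R : realType) (V : tvsType R[i]) (iota : V -> wseq R)
    (p q : nat -> nat) :
  FKspace iota ->
  phi R `<=` inX iota ->
  (forall n, (p n < q n)%N) ->
  (forall M : nat, exists N : nat, forall n, (N <= n)%N -> (M <= q n)%N) ->
  [/\ phi R `<=` DS iota p q /\ DS iota p q `<=` DW iota p q,
      DW iota p q `<=` DF iota p q,
      DF iota p q `<=` DB iota p q,
      DB iota p q `<=` inX iota &
      DW iota p q `<=` phi_closure iota].
Proof.
move=> [_ iota_lin _ _] phiX pq qinf; split.
- by split; [exact: phi_sub_DS | exact: DS_sub_DW].
- exact: DW_sub_DF.
- exact: DF_sub_DB.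
- by move=> x [].
- exact: DW_sub_phi_closure.
Qed.
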